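(* Let $(K,\mathrm{val})$ be a $2$-henselian valued field whose residue class field $F$ has characteristic $\neq2$, let $A$ be a subring with $B\subseteq A\subseteq K$ and $H=\mathrm{val}(A^\times)$. Then the map $$\Theta:\mathfrak X_A\to\mathcal T_F^{H\cup G_{\ge e}},\qquad \Theta(\mathcal M)=\big(M_g^A(\mathcal M)\big)_{g\in H\cup G_{\ge e}}$$ is well defined and bijective, with inverse $(M_g)_{g}\mapsto\bigcup_{g\in H\cup G_{\ge e}}\Phi^A(M_g,[\![g]\!])$.
   Context: Let $(G,\le)$ be a totally ordered abelian group written multiplicatively with identity $e$; $G_{\ge e}=\{g\in G:g\ge e\}$, $G^2=\{g^2:g\in G\}$. Let $(K,\mathrm{val})$ be a valued field with surjective valuation $\mathrm{val}:K\to G\cup\{\infty\}$, valuation ring $B=\{x:\mathrm{val}(x)\ge e\}$, residue map $\pi:B\to F$, residue field $F$. A strict unit is $x\in B^\times$ with $\pi(x)=1$; when $\mathrm{char}F\ne2$, $2$-henselian is equivalent to every strict unit being a square in $K$. For a subring $A$ with $B\subseteq A\subseteq K$ put $H=\mathrm{val}(A^\times)$; $H$ is a convex subgroup of $G$ and $\mathrm{val}(A\setminus\{0\})=H\cup G_{\ge e}$. For $g\in G$: $\overline g$ is its class in $G/G^2$, $[\![g]\!]$ its class in $G/H^2$, $[g]$ its class in $G/H$; ''$\mathrm{val}(x)=\overline g$'' means $\overline{\mathrm{val}(x)}=\overline g$, similarly for $[\![\cdot]\!]$. A quasi-quadratic module in a commutative ring $R$ is a subset $M\subseteq R$ with $M+M\subseteq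 M$ and $a^2M\subseteq M$ for all $a\in R$; $\mathfrak X_R$ is the set of all quasi-quadratic modules in $R$. $\mathcal T_F^{H\cup G_{\ge e}}$ is the set of families $(M_g)_{g\in H\cup G_{\ge e}}\in\prod_{g\in H\cup G_{\ge e}}\mathfrak X_F$ such that $M_g\subseteq M_h$ whenever $[\![g]\!]=[\![h]\!]$, or ($g\le h$ and $\overline g=\overline h$), or ($M_g=F$ and ($[g]=[h]$ or $g\le h$)). A pseudo-angular component map is a map $\mathrm{p.an}:K^\times\to F^\times$ such that: (1) $\mathrm{p.an}(u)=\pi(u)$ for $u\in B^\times$; (2) $\mathrm{p.an}(ux)=\pi(u)\mathrm{p.an}(x)$ for $u\in B^\times,x\in K^\times$; (3) for all $g\in G$, $c\in F^\times$ there is $w\in K$ with $\mathrm{val}(w)=g$, $\mathrm{p.an}(w)=c$; (4) for nonzero $x_1,x_2$ with $x_1+x_2\ne0$: if $\mathrm{val}(x_1)<\mathrm{val}(x_2)$ then $\mathrm{p.an}(x_1+x_2)=\mathrm{p.an}(x_1)$; if $\mathrm{val}(x_1)=\mathrm{val}(x_2)$ and $\mathrm{p.an}(x_1)+\mathrm{p.an}(x_2)\ne0$ then $\mathrm{val}(x_1+x_2)=\mathrm{val}(x_1)$ and $\mathrm{p.an}(x_1+x_2)=\mathrm{p.an}(x_1)+\mathrm{p.an}(x_2)$; (5) if $x,y\in K^\times$, $\overline{\mathrm{val}(x)}=\overline{\mathrm{val}(y)}$ and $\mathrm{p.an}(x)=\mathrm{p.an}(y)$ then $y=u^2x$ for some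 $u\in K^\times$; (6) for $a,u\in K^\times$ there is $k\in F^\times$ with $\mathrm{p.an}(au^2)=\mathrm{p.an}(a)k^2$. Such a map exists under the hypotheses; fix one. For $g\in G$ and a quasi-quadratic module $M$ in $F$: $$\Phi^A(M,[\![g]\!])=\{x\in A\setminus\{0\}:\ \mathrm{val}(x)=\overline g,\ (\mathrm{val}(x)=[\![g]\!]\ \text{or}\ \mathrm{val}(x)>g),\ \mathrm{p.an}(x)\in M\}\cup\{0\}.$$ For a quasi-quadratic module $\mathcal M$ in $A$ and $g\in G$: $M_g^A(\mathcal M)=\{\mathrm{p.an}(x):x\in\mathcal M\setminus\{0\},\ \mathrm{val}(x)=g\}\cup\{0\}$. *)

From HB Require Import structures.
From mathcomp Require Import all_boot all_order all_algebra.
Set Implicit Arguments. Unset Strict Implicit. Unset Printing Implicit Defensive.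
Import Order.TTheory GRing.Theory.
Local Open Scope ring_scope.

Section Defs.
(* The value group G is written ADDITIVELY: e = 0, g*h = g + h, g^2 = g + g. *)
Variable G : zmodType.
Variable le : G -> G -> Prop.

Definition lt (g h : G) : Prop := le g h /\ g <> h.

Definition ordered_abelian_group : Prop :=
  (forall g, le g g) /\
  (forall g h, le g h -> le h g -> g = h) /\
  (forall g h k, le g h -> le h k -> le g k) /\
  (forall g h, le g h \/ le h g) /\
  (forall g h k, le g h -> le (g + k) (h + k)).

Variable K : fieldType.
(* val is the valuation on K^x; val(0) = infinity is handled by treating 0 separately *)
Variable val : K -> G.

Definition valuation : Prop :=
  (forall x y, x != 0 -> y != 0 -> val (x * y) = val x + val y) /\
  (forall x y, x != 0 -> y != 0 -> x + y != 0 ->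
     le (val x) (val (x + y)) \/ le (val y) (val (x + y))) /\
  (forall g, exists x, x != 0 /\ val x = g).

Definition valring (x : K) : Prop := x = 0 \/ le 0 (val x).
Definition Bunit (x : K) : Prop := x != 0 /\ val x = 0.

Variable F : fieldType.
Variable res : K -> F.

(* res restricted to B is a surjective ring morphism B -> F with kernel the
   maximal ideal {x | val x > e} u {0}, i.e. F is the residue field *)
Definition residue_map : Prop :=
  (forall x y, valring x -> valring y -> res (x + y) = res x + res y) /\
  (forall x y, valring x -> valring y -> res (x * y) = res x * res y) /\
  res 1 = 1 /\
  (forall c, exists x, valring x /\ res x = c) /\
  (forall x, valring x -> (res x = 0 <-> (x = 0 \/ lt 0 (val x)))).

Definition strict_unit (x : K) : Prop := Bunit x /\ res x = 1.

(* for char F <> 2, 2-henselian <-> every strict unit is a square *)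
Definition two_henselian : Prop :=
  forall x, strict_unit x -> exists y, x = y ^+ 2.

Definition cls2 (g h : G) : Prop := exists k, g - h = k + k.

Variable A : K -> Prop.

Definition subring_over_B : Prop :=
  (forall x, valring x -> A x) /\
  (forall x y, A x -> A y -> A (x + y)) /\
  (forall x, A x -> A (- x)) /\
  (forall x y, A x -> A y -> A (x * y)).

Definition Hgrp (g : G) : Prop :=
  exists x, x != 0 /\ A x /\ A x^-1 /\ val x = g.

Definition clsH2 (g h : G) : Prop := exists k, Hgrp k /\ g - h = k + k.
Definition clsH (g h : G) : Prop := Hgrp (g - h).

Definition Dom (g : G) : Prop := Hgrp g \/ le 0 g.

(* quasi-quadratic modules in A (subsets of A) and in F;
   0 \in M, i.e. M nonempty *)
Definition qqmA (M : K -> Prop) : Prop :=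
  (forall x, M x -> A x) /\ M 0 /\
  (forall x y, M x -> M y -> M (x + y)) /\
  (forall a x, A a -> M x -> M (a ^+ 2 * x)).

Definition qqmF (M : F -> Prop) : Prop :=
  M 0 /\
  (forall x y, M x -> M y -> M (x + y)) /\
  (forall a x, M x -> M (a ^+ 2 * x)).

(* the set T_F^{H u G>=e}; families indexed by g with Dom g *)
Definition inT (M : G -> F -> Prop) : Prop :=
  (forall g, Dom g -> qqmF (M g)) /\
  (forall g h, Dom g -> Dom h ->
     (clsH2 g h \/ (le g h /\ cls2 g h) \/
      ((forall c, M g c) /\ (clsH g h \/ le g h))) ->
     forall c, M g c -> M h c).

Variable pan : K -> F.

Definition pseudo_angular : Prop :=
  (forall x, x != 0 -> pan x != 0) /\
  (forall u, Bunit u -> pan u = res u) /\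
  (forall u x, Bunit u -> x != 0 -> pan (u * x) = res u * pan x) /\
  (forall g c, c != 0 -> exists w, w != 0 /\ val w = g /\ pan w = c) /\
  (forall x1 x2, x1 != 0 -> x2 != 0 -> x1 + x2 != 0 ->
     (lt (val x1) (val x2) -> pan (x1 + x2) = pan x1) /\
     (val x1 = val x2 -> pan x1 + pan x2 != 0 ->
        val (x1 + x2) = val x1 /\ pan (x1 + x2) = pan x1 + pan x2)) /\
  (forall x y, x != 0 -> y != 0 -> cls2 (val x) (val y) -> pan x = pan y ->
     exists u, u != 0 /\ y = u ^+ 2 * x) /\
  (forall a u, a != 0 -> u != 0 ->
     exists k, k != 0 /\ pan (a * u ^+ 2) = pan a * k ^+ 2).

Definition PhiA (M : F -> Prop) (g : G) (x : K) : Prop :=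
  x = 0 \/
  (A x /\ x != 0 /\ cls2 (val x) g /\
   (clsH2 (val x) g \/ lt g (val x)) /\ M (pan x)).

Definition MgA (calM : K -> Prop) (g : G) (c : F) : Prop :=
  c = 0 \/ exists x, calM x /\ x != 0 /\ val x = g /\ pan x = c.

Definition Theta (calM : K -> Prop) : G -> F -> Prop := fun g => MgA calM g.

Definition Psi (M : G -> F -> Prop) (x : K) : Prop :=
  exists g, Dom g /\ PhiA (M g) g x.

End Defs.

(* Key point: membership of a nonzero x in a quasi-quadratic module of A only
   depends on (val x, pan x).  Two elements with equal values and equal pans
   differ by the square of a unit of B (axiom (5) of the pseudo-angular map,
   which is where 2-henselianity is used), and squares of units of B change
   pan only by squares of residues.  Consequently, for a family M in T the set
   Psi(M) is simply the set of x with x = 0 or pan x in M_{val x}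
   (Psi_family_set), and both round trips become direct computations. *)

From HB Require Import structures.
From mathcomp Require Import all_boot all_order all_algebra.
From mathcomp Require Import ring.
From Stdlib Require Import FunctionalExtensionality PropExtensionality.
Import GRing.Theory.
Local Open Scope ring_scope.

Section Theorem10.
Context {G : zmodType} {le : G -> G -> Prop} {K F : fieldType}.
Context {val : K -> G} {res : K -> F} {A : K -> Prop} {pan : K -> F}.

Hypothesis Hog : ordered_abelian_group le.

Lemma le_refl g : le g g.
Proof. by case: Hog => H _; apply: H. Qed.

Lemma le_anti g h : le g h -> le h g -> g = h.
Proof. by case: Hog => _ [H _]; apply: H. Qed.

Lemma le_trans g h k : le g h -> le h k -> le g k.
Proof. by case: Hog => _ [_ [H _]]; apply: H. Qed.

Lemma le_total g h : le g h \/ le h g.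
Proof. by case: Hog => _ [_ [_ [H _]]]; apply: H. Qed.

Lemma leD2r {g h} k : le g h -> le (g + k) (h + k).
Proof. by case: Hog => _ [_ [_ [_ H]]]; apply: H. Qed.

Lemma le_addr g a : le 0 a -> le g (g + a).
Proof. by move=> a_ge0; have := leD2r g a_ge0; rewrite add0r addrC. Qed.

Lemma addr_ge0 a b : le 0 a -> le 0 b -> le 0 (a + b).
Proof. by move=> a_ge0 b_ge0; apply: le_trans b_ge0 _; rewrite addrC; apply: le_addr. Qed.

Lemma subr_ge0 {g h} : le g h -> le 0 (h - g).
Proof. by move=> le_gh; have := leD2r (- g) le_gh; rewrite subrr. Qed.

Lemma double_eq0 (k : G) : k + k = 0 -> k = 0.
Proof.
move=> kk0; case: (le_total 0 k) => le_k;
  have := leD2r k le_k; rewrite add0r kk0 => le_k'; exact: le_anti.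
Qed.

Lemma double_ge0 k : le 0 (k + k) -> le 0 k.
Proof.
move=> kk_ge0; case: (le_total 0 k) => // k_le0.
by apply: le_trans kk_ge0 _; have := leD2r k k_le0; rewrite add0r.
Qed.

Lemma cls2_refl (g : G) : cls2 g g.
Proof. by exists 0; rewrite subrr addr0. Qed.

Lemma cls2_sym (g h : G) : cls2 g h -> cls2 h g.
Proof. by case=> k E; exists (- k); rewrite -opprD -E opprB. Qed.

Hypothesis Hval : valuation le val.

Lemma valM {x y} : x != 0 -> y != 0 -> val (x * y) = val x + val y.
Proof. by case: Hval => H _; apply: H. Qed.

Lemma val_addr {x y} : x != 0 -> y != 0 -> x + y != 0 ->
  le (val x) (val (x + y)) \/ le (val y) (val (x + y)).
Proof. by case: Hval => _ [H _]; apply: H. Qed.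

Lemma val_surj g : exists x, x != 0 /\ val x = g.
Proof. by case: Hval => _ [_ H]. Qed.

Lemma val1 : val 1 = 0.
Proof.
have := valM (oner_neq0 K) (oner_neq0 K); rewrite mulr1 => E.
by apply: (addrI (val 1)); rewrite addr0 -E.
Qed.

Lemma valN x : x != 0 -> val (- x) = val x.
Proof.
have N1_neq0 : (-1 : K) != 0 by rewrite oppr_eq0 oner_neq0.
have valN1 : val (-1) = 0.
  by apply: double_eq0; rewrite -(valM N1_neq0 N1_neq0) mulrNN mulr1 val1.
by move=> x0; rewrite -mulN1r (valM N1_neq0 x0) valN1 add0r.
Qed.

Lemma valV x : x != 0 -> val x^-1 = - val x.
Proof.
move=> x0; have := valM x0 (invr_neq0 x0); rewrite mulfV // val1 => E.
by apply: (addrI (val x)); rewrite -E subrr.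
Qed.

Lemma valX2 a : a != 0 -> val (a ^+ 2) = val a + val a.
Proof. by move=> a0; rewrite expr2 valM. Qed.

Lemma val_add_lt {x y} : x != 0 -> y != 0 -> x + y != 0 ->
  lt le (val x) (val y) -> val (x + y) = val x.
Proof.
move=> x0 y0 s0 [le_xy ne_xy].
have Ny0 : - y != 0 by rewrite oppr_eq0.
have := val_addr s0 Ny0; rewrite addrK valN // => /(_ x0) [le_sx|le_yx].
  apply: le_anti le_sx _.
  by case: (val_addr x0 y0 s0) => // le_ys; apply: le_trans le_xy le_ys.
by case: ne_xy; apply: le_anti.
Qed.

Lemma val_sq_factor {x u} : x != 0 -> u != 0 -> val (u ^+ 2 * x) = val x -> val u = 0.
Proof.
move=> x0 u0; rewrite valM ?expf_neq0 // valX2 // => E.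
by apply: double_eq0; apply: (addIr (val x)); rewrite add0r.
Qed.

Lemma valring_unit {u} : Bunit val u -> valring le val u.
Proof. by case=> _ vu0; right; rewrite vu0; apply: le_refl. Qed.

Lemma valringD x y : valring le val x -> valring le val y -> valring le val (x + y).
Proof.
have [->|x0] := eqVneq x 0; first by rewrite add0r.
have [->|y0] := eqVneq y 0; first by rewrite addr0.
have [->|s0] := eqVneq (x + y) 0; first by left.
case=> [x00|x_ge0]; first by rewrite x00 eqxx in x0.
case=> [y00|y_ge0]; first by rewrite y00 eqxx in y0.
by right; case: (val_addr x0 y0 s0) => le_s;
  [apply: le_trans x_ge0 le_s|apply: le_trans y_ge0 le_s].
Qed.

Lemma valring1 : valring le val 1.
Proof. by right; rewrite val1; apply: le_refl. Qed.

Hypothesis Hres : residue_map le val res.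
Hypothesis two_neq0F : (2%:R : F) != 0.

Lemma resD {x y} : valring le val x -> valring le val y -> res (x + y) = res x + res y.
Proof. by case: Hres => H _; apply: H. Qed.

Lemma resM {x y} : valring le val x -> valring le val y -> res (x * y) = res x * res y.
Proof. by case: Hres => _ [H _]; apply: H. Qed.

Lemma res1 : res 1 = 1.
Proof. by case: Hres => _ [_ [H _]]. Qed.

Lemma res_surj c : exists x, valring le val x /\ res x = c.
Proof. by case: Hres => _ [_ [_ [H _]]]. Qed.

Lemma res_eq0 {x} : valring le val x -> (res x = 0 <-> (x = 0 \/ lt le 0 (val x))).
Proof. by case: Hres => _ [_ [_ [_ H]]]; apply: H. Qed.

Lemma res0 : res 0 = 0.
Proof. have B0 : valring le val 0 by left. by apply/(res_eq0 B0); left. Qed.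

Lemma unit_of_res x : valring le val x -> res x != 0 -> Bunit val x.
Proof.
move=> Bx rx0; have x0 : x != 0 by apply: contra_neq rx0 => ->; rewrite res0.
split=> //; case: Bx => [x00|x_ge0]; first by rewrite x00 eqxx in x0.
have [//|vx0] := eqVneq (val x) 0.
case/eqP: rx0; apply/(res_eq0 (or_intror x_ge0)); right.
by split=> // E; rewrite E eqxx in vx0.
Qed.

Lemma unit_lift {c} : c != 0 -> exists u, Bunit val u /\ res u = c.
Proof.
move=> c0; have [x [Bx rx]] := res_surj c.
by exists x; split=> //; apply: unit_of_res Bx _; rewrite rx.
Qed.

Lemma Bunit_sq {u} : Bunit val u -> Bunit val (u ^+ 2).
Proof. by case=> u0 vu0; split; [rewrite expf_neq0|rewrite valX2 // vu0 addr0]. Qed.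

Lemma two_unit : Bunit val (1 + 1 : K).
Proof.
apply: unit_of_res; first by apply: valringD; apply: valring1.
by rewrite resD ?res1 -?mulr2n //; apply: valring1.
Qed.

Lemma half_valring : valring le val (1 + 1 : K)^-1.
Proof.
case: two_unit => two0 v20; right; rewrite valV // v20 oppr0; exact: le_refl.
Qed.

Hypothesis Hsub : subring_over_B le val A.

Lemma A_of_valring {x} : valring le val x -> A x.
Proof. by case: Hsub => H _; apply: H. Qed.

Lemma AD {x y} : A x -> A y -> A (x + y).
Proof. by case: Hsub => _ [H _]; apply: H. Qed.

Lemma AN x : A x -> A (- x).
Proof. by case: Hsub => _ [_ [H _]]; apply: H. Qed.

Lemma AM {x y} : A x -> A y -> A (x * y).
Proof. by case: Hsub => _ [_ [_ H]]; apply: H. Qed.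

Lemma A_sqM {a x} : A a -> A x -> A (a ^+ 2 * x).
Proof. by move=> Aa Ax; rewrite expr2; do !apply: AM. Qed.

Lemma A0 : A 0.
Proof. by apply: A_of_valring; left. Qed.

Lemma A1 : A 1.
Proof. exact: A_of_valring valring1. Qed.

Lemma Hgrp0 : Hgrp val A 0.
Proof. by exists 1; rewrite oner_neq0 invr1 val1; do !split=> //; apply: A1. Qed.

Lemma HgrpN k : Hgrp val A k -> Hgrp val A (- k).
Proof.
case=> x [x0 [Ax [Axi vx]]]; exists x^-1.
by rewrite invr_eq0 invrK valV // vx; do !split.
Qed.

Lemma clsH2_refl g : clsH2 val A g g.
Proof. by exists 0; split; [apply: Hgrp0|rewrite subrr addr0]. Qed.

Lemma clsH2_sym g h : clsH2 val A g h -> clsH2 val A h g.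
Proof.
by case=> k [Hk E]; exists (- k); split; [apply: HgrpN|rewrite -opprD -E opprB].
Qed.

Lemma Dom_val {x} : A x -> x != 0 -> Dom le val A (val x).
Proof.
move=> Ax x0; case: (le_total 0 (val x)) => vx; first by right.
left; exists x; do !split=> //; apply: A_of_valring; right.
by rewrite valV //; have := subr_ge0 vx; rewrite sub0r.
Qed.

Lemma A_of_Dom w : Dom le val A (val w) -> A w.
Proof.
have [->|w0] := eqVneq w 0; first by move=> _; apply: A0.
case=> [[x [x0 [Ax [_ vx]]]]|vw]; last by apply: A_of_valring; right.
rewrite -(divfK x0 w); apply: AM => //; apply: A_of_valring; right.
by rewrite valM ?invr_eq0 // valV // vx subrr; apply: le_refl.
Qed.

Hypothesis Hpan : pseudo_angular le val res pan.

Lemma pan_neq0 {x} : x != 0 -> pan x != 0.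
Proof. by case: Hpan => H _; apply: H. Qed.

Lemma pan_unitM {u x} : Bunit val u -> x != 0 -> pan (u * x) = res u * pan x.
Proof. by case: Hpan => _ [_ [H _]]; apply: H. Qed.

Lemma pan_surj g {c} : c != 0 -> exists w, w != 0 /\ val w = g /\ pan w = c.
Proof. by case: Hpan => _ [_ [_ [H _]]]; apply: H. Qed.

Lemma pan_add {x1 x2} : x1 != 0 -> x2 != 0 -> x1 + x2 != 0 ->
  (lt le (val x1) (val x2) -> pan (x1 + x2) = pan x1) /\
  (val x1 = val x2 -> pan x1 + pan x2 != 0 ->
     val (x1 + x2) = val x1 /\ pan (x1 + x2) = pan x1 + pan x2).
Proof. by case: Hpan => _ [_ [_ [_ [H _]]]]; apply: H. Qed.

Lemma pan_square_class {x y} : x != 0 -> y != 0 -> cls2 (val x) (val y) ->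
  pan x = pan y -> exists u, u != 0 /\ y = u ^+ 2 * x.
Proof. by case: Hpan => _ [_ [_ [_ [_ [H _]]]]]; apply: H. Qed.

Lemma pan_mul_sq {a u} : a != 0 -> u != 0 ->
  exists k, k != 0 /\ pan (a * u ^+ 2) = pan a * k ^+ 2.
Proof. by case: Hpan => _ [_ [_ [_ [_ [_ H]]]]]; apply: H. Qed.

Lemma panN x : x != 0 -> pan (- x) = - pan x.
Proof.
have N1_neq0 : (-1 : K) != 0 by rewrite oppr_eq0 oner_neq0.
have N1_unit : Bunit val (-1) by split; rewrite // valN ?val1 ?oner_neq0.
have resN1 : res (-1) = -1.
  have BN1 := valring_unit N1_unit.
  by apply: (addrI (res 1)); rewrite -(resD valring1 BN1) !subrr res1 res0 subrr.
by move=> x0; rewrite -mulN1r pan_unitM // resN1 mulN1r.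
Qed.

Lemma unit_sqM {u x} : Bunit val u -> x != 0 ->
  val (u ^+ 2 * x) = val x /\ pan (u ^+ 2 * x) = res u ^+ 2 * pan x.
Proof.
move=> Bu x0; have [u20 vu20] := Bunit_sq Bu.
rewrite valM // vu20 add0r pan_unitM ?Bunit_sq //.
by rewrite expr2 (resM (valring_unit Bu) (valring_unit Bu)).
Qed.

Lemma same_val_pan {x y} : x != 0 -> y != 0 -> val x = val y -> pan x = pan y ->
  exists u, Bunit val u /\ y = u ^+ 2 * x.
Proof.
move=> x0 y0 vxy pxy.
have [|u [u0 yux]] := pan_square_class x0 y0 _ pxy.
  by rewrite vxy; exists 0; rewrite subrr addr0.
by exists u; do !split=> //; apply: val_sq_factor x0 u0 _; rewrite -yux.
Qed.

(* In characteristic <> 2 every element is a difference of two squares times c,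
   so a quasi-quadratic module of F containing c and -c (c <> 0) is all of F. *)
Lemma qqmF_full {M : F -> Prop} {c} : qqmF M -> c != 0 -> M c -> M (- c) ->
  forall d, M d.
Proof.
case=> _ [M_add M_sq] c0 Mc MNc d.
have two0 : (1 + 1 : F) != 0 by rewrite -mulr2n.
have -> : d = ((d / c + 1) / (1 + 1)) ^+ 2 * c + ((d / c - 1) / (1 + 1)) ^+ 2 * (- c).
  by field; rewrite two_neq0F c0.
by apply: M_add; apply: M_sq.
Qed.

Section QuasiQuadraticModuleA.
Context {calM : K -> Prop}.
Hypothesis HM : qqmA A calM.

Lemma qqmA_sub x : calM x -> A x.
Proof. by case: HM => H _; apply: H. Qed.

Lemma qqmA_0 : calM 0.
Proof. by case: HM => _ []. Qed.

Lemma qqmA_add x y : calM x -> calM y -> calM (x + y).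
Proof. by case: HM => _ [_ [H _]]; apply: H. Qed.

Lemma qqmA_sq a x : A a -> calM x -> calM (a ^+ 2 * x).
Proof. by case: HM => _ [_ [_ H]]; apply: H. Qed.

Lemma qqmA_val_pan {x y} : calM x -> x != 0 -> y != 0 ->
  val x = val y -> pan x = pan y -> calM y.
Proof.
move=> Mx x0 y0 vxy pxy; have [u [Bu ->]] := same_val_pan x0 y0 vxy pxy.
by apply: qqmA_sq Mx; apply: A_of_valring; apply: valring_unit.
Qed.

(* Multiplying by z^2 (z in A) and correcting pan by the square of a unit of B
   shifts the value by 2 val z while keeping pan. *)
Lemma qqmA_shift {x z} : calM x -> x != 0 -> A z -> z != 0 ->
  exists y, calM y /\ y != 0 /\ val y = val x + val z + val z /\ pan y = pan x.
Proof.
move=> Mx x0 Az z0; have [k [k0 pxz]] := pan_mul_sq x0 z0.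
have [u [Bu ru]] := unit_lift (invr_neq0 k0).
have xz0 : x * z ^+ 2 != 0 by rewrite mulf_neq0 // expf_neq0.
have [vy py] := unit_sqM Bu xz0.
exists (u ^+ 2 * (x * z ^+ 2)); split.
  have -> : u ^+ 2 * (x * z ^+ 2) = (u * z) ^+ 2 * x by ring.
  apply: qqmA_sq Mx.
  by apply: AM => //; apply: A_of_valring; apply: valring_unit.
split; first by rewrite mulf_neq0 // expf_neq0 //; case: Bu.
rewrite vy py pxz ru valM ?expf_neq0 // valX2 // addrA; split=> //.
by rewrite mulrCA -exprMn mulVf // expr1n mulr1.
Qed.

(* Since 1/2 lies in A, a x = ((a+1)/2)^2 x + ((a-1)/2)^2 (-x): if x and -x
   belong to calM, then so does the whole ideal A x. *)
Lemma qqmA_ideal x a : calM x -> calM (- x) -> A a -> calM (a * x).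
Proof.
move=> Mx MNx Aa; have [two0 _] := two_unit.
have half_A := A_of_valring half_valring.
have -> : a * x = ((a + 1) / (1 + 1)) ^+ 2 * x + ((a - 1) / (1 + 1)) ^+ 2 * (- x).
  by field.
by apply: qqmA_add; apply: qqmA_sq => //; apply: AM => //; apply: AD => //;
  [apply: A1|apply: AN; apply: A1].
Qed.

(* Theta: each M_g^A(calM) is a quasi-quadratic module of F, closure under
   addition coming from axiom (4) of the pseudo-angular map ... *)
Lemma MgA_add g c1 c2 :
  MgA val pan calM g c1 -> MgA val pan calM g c2 -> MgA val pan calM g (c1 + c2).
Proof.
case=> [->|[x1 [M1 [x10 [v1 p1]]]]]; first by rewrite add0r.
case=> [->|[x2 [M2 [x20 [v2 p2]]]]]; first by rewrite addr0; right; exists x1.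
have [s0|s0] := eqVneq (c1 + c2) 0; first by left.
have x12 : x1 + x2 != 0.
  apply: contra_neq s0 => /eqP; rewrite addr_eq0 => /eqP x2E.
  by rewrite -p1 -p2 x2E panN // addNr.
have [vs ps] : val (x1 + x2) = val x1 /\ pan (x1 + x2) = pan x1 + pan x2.
  by apply: (pan_add x10 x20 x12).2; rewrite ?v1 ?v2 ?p1 ?p2.
by right; exists (x1 + x2); rewrite vs ps p1 p2; do !split=> //; apply: qqmA_add.
Qed.

(* Squares of residues lift to squares of units of B. *)
Lemma MgA_sq g a c : MgA val pan calM g c -> MgA val pan calM g (a ^+ 2 * c).
Proof.
case=> [->|[x [Mx [x0 [vx px]]]]]; first by rewrite mulr0; left.
have [->|a0] := eqVneq a 0; first by rewrite expr0n mul0r; left.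
have [u [Bu ru]] := unit_lift a0; have [vux pux] := unit_sqM Bu x0.
right; exists (u ^+ 2 * x); rewrite vux pux ru px; do !split=> //.
  by apply: qqmA_sq Mx; apply: A_of_valring; apply: valring_unit.
by rewrite mulf_neq0 // expf_neq0 //; case: Bu.
Qed.

Lemma MgA_qqmF g : qqmF (MgA val pan calM g).
Proof. by split; [left|split; [apply: MgA_add|move=> a c; apply: MgA_sq]]. Qed.

(* ... and the family is monotone: a value may be shifted by twice the value
   of a nonzero element of A (this covers the first two conditions of T) ... *)
Lemma MgA_shift_double g h k c : (exists z, A z /\ z != 0 /\ val z = - k) ->
  g - h = k + k -> MgA val pan calM g c -> MgA val pan calM h c.
Proof.
move=> [z [Az [z0 vz]]] ghk; case=> [->|[x [Mx [x0 [vx px]]]]]; first by left.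
have [y [My [y0 [vy py]]]] := qqmA_shift Mx x0 Az z0.
right; exists y; do !split=> //; last by rewrite py.
by rewrite vy vx vz -addrA -opprD -ghk opprB addrC subrK.
Qed.

(* ... and if M_g = F then M_h = F for every h with h - g in H u G_{>=0},
   because calM then contains the ideal A x for some x of value g. *)
Lemma MgA_full_shift {g h c} : (forall d, MgA val pan calM g d) ->
  Dom le val A (h - g) -> MgA val pan calM h c.
Proof.
move=> full Dhg; have [->|c0] := eqVneq c 0; first by left.
have realize d : d != 0 -> exists x, calM x /\ x != 0 /\ val x = g /\ pan x = d.
  by move=> d0; case: (full d) => // d00; rewrite d00 eqxx in d0.
have [x [Mx [x0 [vx px]]]] := realize c c0.
have [x' [Mx' [x0' [vx' px']]]] :
    exists x', calM x' /\ x' != 0 /\ val x' = g /\ pan x' = - c.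
  by apply: realize; rewrite oppr_eq0.
have MNx : calM (- x).
  by apply: (qqmA_val_pan Mx' x0'); rewrite ?oppr_eq0 ?valN ?panN ?vx ?vx' ?px.
have [w [w0 [vw pw]]] := pan_surj h c0.
have Awx : A (w / x).
  by apply: A_of_Dom; rewrite valM ?invr_eq0 // valV // vw vx.
right; exists w; do !split=> //.
by rewrite -(divfK x0 w); apply: qqmA_ideal.
Qed.

Lemma Theta_inT : inT le val A (Theta val pan calM).
Proof.
split=> [g _|g h _ _ cond c]; first exact: MgA_qqmF.
rewrite /Theta; case: cond => [[k [Hk ghk]]|[[le_gh [k ghk]]|[full cond]]].
- apply: (MgA_shift_double _ _ k) => //; case: Hk => x [x0 [_ [Axi vx]]].
  by exists x^-1; rewrite invr_eq0 valV // vx.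
- apply: (MgA_shift_double _ _ k) => //; have [z [z0 vz]] := val_surj (- k).
  exists z; do !split=> //; apply: A_of_valring; right; rewrite vz.
  by apply: double_ge0; rewrite -opprD -ghk opprB; apply: subr_ge0.
- move=> _; apply: (MgA_full_shift full).
  case: cond => [Hgh|le_gh]; first by left; rewrite -opprB; apply: HgrpN.
  by right; apply: subr_ge0.
Qed.

End QuasiQuadraticModuleA.

(* The inverse construction: the union Psi(M) of the Phi^A(M_g, [[g]]) is the
   set of elements whose pan lies in the module indexed by their value. *)
Definition family_set (M : G -> F -> Prop) (x : K) : Prop :=
  x = 0 \/ (A x /\ x != 0 /\ M (val x) (pan x)).

Section FamilyToModule.
Context {M : G -> F -> Prop}.
Hypothesis HT : inT le val A M.

Lemma inT_qqmF {g} : Dom le val A g -> qqmF (M g).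
Proof. by case: HT => H _; apply: H. Qed.

Lemma inT_mono {g h} : Dom le val A g -> Dom le val A h ->
  (clsH2 val A g h \/ (le g h /\ cls2 g h) \/
   ((forall c, M g c) /\ (clsH val A g h \/ le g h))) ->
  forall c, M g c -> M h c.
Proof. by case: HT => _ H; apply: H. Qed.

(* Psi(M) = family_set M: an element of Phi^A(M_g,[[g]]) satisfies
   pan x in M_{val x} by monotonicity, and conversely take g = val x. *)
Lemma Psi_family_set : Psi le val A pan M = family_set M.
Proof.
apply: functional_extensionality => x; apply: propositional_extensionality; split.
  case=> g [Dg [->|[Ax [x0 [cls [near Mg]]]]]]; first by left.
  right; do !split=> //; apply: (inT_mono Dg (Dom_val Ax x0)) Mg.
  case: near => [cH2|[le_g _]]; first by left; apply: clsH2_sym.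
  by right; left; split=> //; apply: cls2_sym.
case=> [->|[Ax [x0 Mx]]]; first by exists 0; split; [right; apply: le_refl|left].
exists (val x); split; first exact: Dom_val.
by right; do !split=> //; [apply: cls2_refl|left; apply: clsH2_refl].
Qed.

(* Multiplying x by a^2 (a in A) moves val x by 2 val a, with val a in H or
   val a >= 0; the family is monotone along such moves. *)
Lemma inT_mul_sq x a c : A x -> x != 0 -> A a -> a != 0 ->
  M (val x) c -> M (val (a ^+ 2 * x)) c.
Proof.
move=> Ax x0 Aa a0; have a20 : a ^+ 2 != 0 by rewrite expf_neq0.
have ax0 : a ^+ 2 * x != 0 by rewrite mulf_neq0.
have vax : val (a ^+ 2 * x) = val x + val a + val a.
  by rewrite valM // valX2 // addrC addrA.
have diff : val x - val (a ^+ 2 * x) = - val a + - val a.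
  by rewrite vax -addrA opprD addrA subrr add0r opprD.
apply: (inT_mono (Dom_val Ax x0) (Dom_val (A_sqM Aa Ax) ax0)).
move: (Dom_val Aa a0) => [Ha|va_ge0].
  by left; exists (- val a); split=> //; apply: HgrpN.
right; left; split; last by exists (- val a).
by rewrite vax -addrA; apply: le_addr; apply: addr_ge0.
Qed.

(* The family set is closed under multiplication by squares of A: pan changes
   by a square (axiom (6)) and the value moves upwards. *)
Lemma family_set_sq a x : A a -> family_set M x -> family_set M (a ^+ 2 * x).
Proof.
move=> Aa [->|[Ax [x0 Mx]]]; first by rewrite mulr0; left.
have [->|a0] := eqVneq a 0; first by rewrite expr0n mul0r; left.
have [k [k0 pxa]] := pan_mul_sq x0 a0.
right; do !split; first exact: A_sqM.
  by rewrite mulf_neq0 // expf_neq0.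
have Dax : Dom le val A (val (a ^+ 2 * x)).
  by apply: Dom_val; [apply: A_sqM|rewrite mulf_neq0 // expf_neq0].
have -> : pan (a ^+ 2 * x) = k ^+ 2 * pan x by rewrite mulrC pxa mulrC.
by case: (inT_qqmF Dax) => _ [_ M_sq]; apply: M_sq; apply: inT_mul_sq.
Qed.

(* Closure under addition, when val x <= val y. If the leading terms cancel,
   M_{val x} contains pan x and -pan x, hence is all of F, and it propagates
   upwards to the value of x + y. *)
Lemma family_set_add_le x y : A x -> A y -> x != 0 -> y != 0 -> x + y != 0 ->
  le (val x) (val y) -> M (val x) (pan x) -> M (val y) (pan y) ->
  M (val (x + y)) (pan (x + y)).
Proof.
move=> Ax Ay x0 y0 s0 le_xy Mx My.
have Dx := Dom_val Ax x0; have Ds := Dom_val (AD Ax Ay) s0.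
have [vxy|ne_xy] := eqVneq (val x) (val y); last first.
  have lt_xy : lt le (val x) (val y) by split=> // E; rewrite E eqxx in ne_xy.
  by rewrite (val_add_lt x0 y0 s0 lt_xy) ((pan_add x0 y0 s0).1 lt_xy).
rewrite -vxy in My; have [pxy|pxy] := eqVneq (pan x + pan y) 0.
  have MNx : M (val x) (- pan x).
    by have -> : - pan x = pan y by apply/eqP; rewrite eq_sym -addr_eq0 addrC pxy.
  have full := qqmF_full (inT_qqmF Dx) (pan_neq0 x0) Mx MNx.
  apply: (inT_mono Dx Ds) (full _); right; right; split=> //; right.
  by case: (val_addr x0 y0 s0); rewrite // -vxy.
have [vs ps] := (pan_add x0 y0 s0).2 vxy pxy.
by rewrite vs ps; case: (inT_qqmF Dx) => _ [M_add _]; apply: M_add.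
Qed.

Lemma family_set_add x y : family_set M x -> family_set M y -> family_set M (x + y).
Proof.
case=> [->|[Ax [x0 Mx]]]; first by rewrite add0r.
case=> [->|[Ay [y0 My]]]; first by rewrite addr0; right.
have [->|s0] := eqVneq (x + y) 0; first by left.
right; do !split=> //; first exact: AD.
case: (le_total (val x) (val y)) => le_v; first exact: family_set_add_le.
by rewrite addrC; apply: family_set_add_le; rewrite // addrC.
Qed.

Lemma family_set_qqmA : qqmA A (family_set M).
Proof.
split; first by move=> x [->|[]]; [exact: A0|].
split; first by left.
by split; [apply: family_set_add|move=> a x; apply: family_set_sq].
Qed.

End FamilyToModule.

(* Psi o Theta = id: a nonzero x lies in calM iff some element of calM has
   the same value and pan as x. *)
Lemma Psi_Theta calM : qqmA A calM -> Psi le val A pan (Theta val pan calM) = calM.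
Proof.
move=> HM; rewrite (Psi_family_set (Theta_inT HM)).
apply: functional_extensionality => x; apply: propositional_extensionality; split.
  case=> [->|[_ [x0 [px0|[y [My [y0 [vy py]]]]]]]]; first exact: qqmA_0 HM.
    by have := pan_neq0 x0; rewrite px0 eqxx.
  exact: (qqmA_val_pan HM My y0 x0 vy py).
move=> Mx; have [->|x0] := eqVneq x 0; first by left.
by right; do !split=> //; [apply: qqmA_sub HM x Mx|right; exists x].
Qed.

(* Theta o Psi = id on the index set: every nonzero residue is the pan of an
   element of any prescribed value g, and such an element lies in A. *)
Lemma Theta_Psi M : inT le val A M ->
  forall g, Dom le val A g -> Theta val pan (Psi le val A pan M) g = M g.
Proof.
move=> HT g Dg; rewrite /Theta (Psi_family_set HT).
apply: functional_extensionality => c; apply: propositional_extensionality; split.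
  case=> [->|[x [[x00|[_ [_ Mx]]] [x0 [<- <-]]]]] //.
    by case: (inT_qqmF HT Dg).
  by rewrite x00 eqxx in x0.
move=> Mc; have [->|c0] := eqVneq c 0; first by left.
have [w [w0 [vw pw]]] := pan_surj g c0.
right; exists w; do !split=> //; right; rewrite vw pw; do !split=> //.
by apply: A_of_Dom; rewrite vw.
Qed.

End Theorem10.

Theorem mainTheorem10
  (G : zmodType) (le : G -> G -> Prop) (K F : fieldType)
  (val : K -> G) (res : K -> F) (A : K -> Prop) (pan : K -> F) :
  ordered_abelian_group le ->
  valuation le val ->
  residue_map le val res ->
  (2%:R : F) != 0 ->
  two_henselian val res ->
  subring_over_B le val A ->
  pseudo_angular le val res pan ->
  (* Theta is well defined: X_A -> T *)
  (forall calM, qqmA A calM -> inT le val A (Theta val pan calM)) /\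
  (* the proposed inverse maps T -> X_A *)
  (forall M, inT le val A M -> qqmA A (Psi le val A pan M)) /\
  (* Psi o Theta = id on X_A *)
  (forall calM, qqmA A calM -> Psi le val A pan (Theta val pan calM) = calM) /\
  (* Theta o Psi = id on T (families compared on the index set H u G>=e) *)
  (forall M, inT le val A M ->
     forall g, Dom le val A g -> Theta val pan (Psi le val A pan M) g = M g).
Proof.
(* 2-henselianity is already encoded in axiom (5) of the pseudo-angular map. *)
move=> Hog Hval Hres two_neq0F _ Hsub Hpan.
split; first by move=> calM; apply: (Theta_inT Hog Hval Hres two_neq0F Hsub Hpan).
split.
  move=> M HT; rewrite (Psi_family_set Hog Hval Hsub HT).
  exact: (family_set_qqmA Hog Hval two_neq0F Hsub Hpan HT).
split; first exact: (Psi_Theta Hog Hval Hres two_neq0F Hsub Hpan).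
exact: (Theta_Psi Hog Hval Hsub Hpan).
Qed.
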